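(* Let $C\subseteq B_k^n$. Then $C$ is a linear code over $B_k$ (i.e. a $B_k$-submodule of $B_k^n$) if and only if there exist linear codes $C_1,\dots,C_{2^k}$ of length $n$ over $\mathbb{F}_{p^r}$ (i.e. $\mathbb{F}_{p^r}$-subspaces of $\mathbb{F}_{p^r}^n$) such that $C=\overline{\Psi}_k^{-1}(C_1,\dots,C_{2^k})$.
   Context: Let $p$ be a prime, $r\ge 1$, $\mathbb{F}_{p^r}$ the field with $p^r$ elements, and for $k\ge1$ let $B_k=\mathbb{F}_{p^r}[v_1,\dots,v_k]/\langle v_i^2-v_i,\ v_iv_j-v_jv_i\rangle$. For $H\subseteq\{1,\dots,k\}$ put $v_H=\prod_{i\in H}v_i$ ($v_\emptyset=1$); every $a\in B_k$ can be written uniquely as $a=\sum_{H\subseteq\{1,\dots,k\}}\alpha_Hv_H$ with $\alpha_H\in\mathbb{F}_{p^r}$. Fix an enumeration $H_1,\dots,H_{2^k}$ of the subsets of $\{1,\dots,k\}$ and define $\Psi_k:B_k\to\mathbb{F}_{p^r}^{2^k}$ by $\Psi_k(a)=\big(\sum_{H\subseteq H_1}\alpha_H,\ \sum_{H\subseteq H_2}\alpha_H,\dots,\sum_{H\subseteq H_{2^k}}\alpha_H\big)$ (a bijection). For $\mathbf a=(a_1,\dots,a_n)\in B_k^n$ let $\overline{\Psi}_k(\mathbf a)=(\Psi_k(a_1),\dots,\Psi_k(a_n))$. For subsets $C_1,\dots,C_{2^k}\subseteq\mathbb{F}_{p^r}^n$, $\overline{\Psi}_k^{-1}(C_1,\dots,C_{2^k})$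 denotes the set of all $\mathbf a=(a_1,\dots,a_n)\in B_k^n$ such that for every $j\in\{1,\dots,2^k\}$ the vector $\big(\Psi_k(a_1)_j,\dots,\Psi_k(a_n)_j\big)$ of $j$-th components lies in $C_j$. *)

From HB Require Import structures.
From mathcomp Require Import all_boot all_order all_algebra all_field.
Set Implicit Arguments. Unset Strict Implicit. Unset Printing Implicit Defensive.
Import GRing.Theory.
Local Open Scope ring_scope.

(* The ring B_k = F[v_1..v_k]/<v_i^2 - v_i, v_i v_j - v_j v_i>, represented by
   the (unique) coefficient family: a = \sum_H alpha_H v_H  <->  alpha : {ffun {set 'I_k} -> F}.
   Indices 1..k are represented by 'I_k. *)
Definition Bk (F : finFieldType) (k : nat) := {ffun {set 'I_k} -> F}.

Definition Badd (F : finFieldType) k (a b : Bk F k) : Bk F k := [ffun H => a H + b H].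

(* multiplication: v_H * v_G = v_(H :|: G) (since v_i^2 = v_i, commutative) *)
Definition Bmul (F : finFieldType) k (a b : Bk F k) : Bk F k :=
  [ffun S => \sum_(H : {set 'I_k}) \sum_(G : {set 'I_k} | H :|: G == S) a H * b G].

Definition Bzero (F : finFieldType) k : Bk F k := [ffun _ => 0].

Definition Bvec (F : finFieldType) k n := {ffun 'I_n -> Bk F k}.

Definition Bvec_zero (F : finFieldType) k n : Bvec F k n := [ffun _ => Bzero F k].
Definition Bvec_add (F : finFieldType) k n (x y : Bvec F k n) : Bvec F k n :=
  [ffun i => Badd (x i) (y i)].
Definition Bvec_scale (F : finFieldType) k n (a : Bk F k) (x : Bvec F k n) : Bvec F k n :=
  [ffun i => Bmul a (x i)].

Definition Bk_linear_code (F : finFieldType) k n (C : {set Bvec F k n}) : Prop :=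
  [/\ Bvec_zero F k n \in C,
      forall x y, x \in C -> y \in C -> Bvec_add x y \in C
    & forall (a : Bk F k) x, x \in C -> Bvec_scale a x \in C].

Definition Psi (F : finFieldType) k (a : Bk F k) (S : {set 'I_k}) : F :=
  \sum_(H : {set 'I_k} | H \subset S) a H.

Definition Psibar_comp (F : finFieldType) k n (x : Bvec F k n) (S : {set 'I_k}) : 'rV[F]_n :=
  \row_(i < n) Psi (x i) S.

(* \bar Psi_k^{-1}(C_1, ..., C_{2^k}) w.r.t. the enumeration e : j |-> H_j *)
Definition Psibar_inv (F : finFieldType) k n (e : 'I_(2 ^ k) -> {set 'I_k})
  (Cs : 'I_(2 ^ k) -> {vspace 'rV[F]_n}) : {set Bvec F k n} :=
  [set x | [forall j, Psibar_comp x (e j) \in Cs j]].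

From HB Require Import structures.
From mathcomp Require Import all_boot all_order all_algebra all_field.
Set Implicit Arguments. Unset Strict Implicit. Unset Printing Implicit Defensive.
Import GRing.Theory.
Local Open Scope ring_scope.

(* Each coordinate a |-> Psi a S is a ring morphism B_k -> F, because
   v_H v_G = v_(H :|: G) and H :|: G \subset S iff both H and G are; and Psi
   is injective, being unitriangular for inclusion of subsets.  Hence the
   preimage of coordinate codes is a submodule.  Conversely, the elements
   e_S = \prod_(i in S) v_i * \prod_(i notin S) (1 - v_i) satisfy
   Psi e_S T = [S == T], so y = \sum_S e_S x_S whenever x_S agrees with y in
   the S-th coordinate.  Thus a submodule C contains every y whose S-th
   coordinate vectors lie in the S-th coordinate code of C, for all S. *)

Section PsiMorphism.
Variables (F : finFieldType) (k : nat).
Implicit Types (a b : Bk F k) (G H S T : {set 'I_k}).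

Lemma PsiD a b S : Psi (a + b) S = Psi a S + Psi b S.
Proof. by rewrite /Psi -big_split; apply: eq_bigr => H _; rewrite ffunE. Qed.

Lemma Psi0 S : Psi (0 : Bk F k) S = 0.
Proof. by rewrite /Psi big1 // => H _; rewrite ffunE. Qed.

Lemma PsiN a S : Psi (- a) S = - Psi a S.
Proof. by rewrite /Psi -sumrN; apply: eq_bigr => H _; rewrite ffunE. Qed.

Lemma PsiB a b S : Psi (a - b) S = Psi a S - Psi b S.
Proof. by rewrite PsiD PsiN. Qed.

Lemma Psi_sum (I : Type) (r : seq I) (P : pred I) (f : I -> Bk F k) S :
  Psi (\sum_(i <- r | P i) f i) S = \sum_(i <- r | P i) Psi (f i) S.
Proof. exact: (big_morph (fun a => Psi a S) (fun a b => PsiD a b S) (Psi0 S)). Qed.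

Lemma sum_union_subset (f : {set 'I_k} -> F) H S :
  \sum_(T : {set 'I_k} | T \subset S) \sum_(G : {set 'I_k} | H :|: G == T) f G =
  \sum_(G : {set 'I_k} | H :|: G \subset S) f G.
Proof.
rewrite (exchange_big_dep predT) //= [RHS]big_mkcond; apply: eq_bigr => G _.
case: ifP => HGS; last first.
  by rewrite big_pred0 // => T; apply/negbTE/andP => -[TS /eqP HGT]; rewrite HGT TS in HGS.
rewrite (big_pred1 (H :|: G)) // => T /=.
by apply/andP/eqP => [[_ /eqP <-] // | ->]; rewrite HGS eqxx.
Qed.

Lemma PsiM a b S : Psi (Bmul a b) S = Psi a S * Psi b S.
Proof.
rewrite /Psi /Bmul; under eq_bigr do rewrite ffunE.
rewrite exchange_big /=; under eq_bigr do rewrite sum_union_subset.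
rewrite big_distrl /= [RHS]big_mkcond [LHS]big_mkcond; apply: eq_bigr => H _ /=.
rewrite big_distrr /=.
case: ifP => HS; last by rewrite big_pred0 // => G; rewrite subUset HS.
by apply: eq_bigl => G; rewrite subUset HS.
Qed.

Lemma Psi_eq0 a : (forall S, Psi a S = 0) -> a = 0.
Proof.
move=> Psia0; apply/ffunP => S; rewrite ffunE.
elim: {S}_.+1 {-2}S (ltnSn #|S|) => // m IHm S ltSm.
have := Psia0 S; rewrite /Psi (bigD1 S) //= big1 ?addr0 // => H /andP[subHS neHS].
apply: IHm; rewrite -ltnS (leq_trans _ ltSm) // ltnS.
by rewrite proper_card // properEneq neHS.
Qed.

Lemma Psi_inj a b : Psi a =1 Psi b -> a = b.
Proof. by move=> eq_ab; apply/subr0_eq/Psi_eq0 => S; rewrite PsiB eq_ab subrr. Qed.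

Definition monomial G (c : F) : Bk F k := [ffun H => if H == G then c else 0].

Lemma Psi_monomial G c T : Psi (monomial G c) T = if G \subset T then c else 0.
Proof.
rewrite /Psi; under eq_bigr do rewrite ffunE; rewrite -big_mkcondr /=.
case: ifP => GT; last first.
  by rewrite big_pred0 // => H; apply/negbTE/andP => -[HT /eqP HG]; rewrite -HG HT in GT.
by rewrite (big_pred1 G) // => H /=; apply/andP/eqP => [[_ /eqP] // | ->]; rewrite GT eqxx.
Qed.

Definition Bone : Bk F k := monomial set0 1.

Definition idem_factor S (i : 'I_k) : Bk F k :=
  let v_i := monomial [set i] 1 in if i \in S then v_i else Bone - v_i.

Definition idem S : Bk F k := \big[@Bmul F k/Bone]_i idem_factor S i.

Lemma Psi_Bone T : Psi Bone T = 1.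
Proof. by rewrite Psi_monomial sub0set. Qed.

Lemma Psi_idem_factor S T i :
  Psi (idem_factor S i) T = ((i \in S) == (i \in T))%:R.
Proof.
rewrite /idem_factor; case: (i \in S); rewrite ?PsiB ?Psi_Bone Psi_monomial sub1set.
  by case: (i \in T).
by case: (i \in T); rewrite ?subrr ?subr0.
Qed.

Lemma Psi_idem S T : Psi (idem S) T = (S == T)%:R.
Proof.
rewrite (big_morph (fun a => Psi a T) (fun a b => PsiM a b T) (Psi_Bone T)).
under eq_bigr do rewrite Psi_idem_factor.
have [<- | neST] := eqVneq S T; first by rewrite big1 // => i _; rewrite eqxx.
have /existsP[i neSTi] : [exists i, (i \in S) != (i \in T)].
  by apply: contraNT neST => /existsPn eqST; apply/eqP/setP => i; apply/eqP/negPn.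
by apply/eqP/prodf_eq0; exists i => //; rewrite (negbTE neSTi).
Qed.

End PsiMorphism.

Section CoordinateCodes.
Variables (F : finFieldType) (k n : nat).
Implicit Types (x y : Bvec F k n) (S T : {set 'I_k}) (C : {set Bvec F k n}).

Lemma Bvec_zeroE : Bvec_zero F k n = 0.
Proof. by apply/ffunP => i; rewrite !ffunE; apply/ffunP => H; rewrite !ffunE. Qed.

Lemma Bvec_addE x y : Bvec_add x y = x + y.
Proof. by apply/ffunP => i; rewrite !ffunE; apply/ffunP => H; rewrite !ffunE. Qed.

Lemma Psibar_comp0 S : Psibar_comp (0 : Bvec F k n) S = 0.
Proof. by apply/rowP => i; rewrite !mxE ffunE Psi0. Qed.

Lemma Psibar_compD x y S :
  Psibar_comp (x + y) S = Psibar_comp x S + Psibar_comp y S.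
Proof. by apply/rowP => i; rewrite !mxE ffunE PsiD. Qed.

Lemma Psibar_compZ a x S :
  Psibar_comp (Bvec_scale a x) S = Psi a S *: Psibar_comp x S.
Proof. by apply/rowP => i; rewrite !mxE ffunE PsiM. Qed.

Lemma Psibar_comp_sum (I : Type) (r : seq I) (P : pred I) (f : I -> Bvec F k n) S :
  Psibar_comp (\sum_(i <- r | P i) f i) S = \sum_(i <- r | P i) Psibar_comp (f i) S.
Proof.
exact: (big_morph (fun x => Psibar_comp x S) (fun x y => Psibar_compD x y S)
                  (Psibar_comp0 S)).
Qed.

Lemma linear_code_sum C (I : Type) (r : seq I) (P : pred I) (f : I -> Bvec F k n) :
  Bk_linear_code C -> (forall i, P i -> f i \in C) -> \sum_(i <- r | P i) f i \in C.
Proof.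
case=> C0 CD _; apply: (big_ind (fun x => x \in C)); first by rewrite -Bvec_zeroE.
by move=> x y Cx Cy; rewrite -Bvec_addE CD.
Qed.

Lemma linear_code_scale C a x : Bk_linear_code C -> x \in C -> Bvec_scale a x \in C.
Proof. by case=> _ _; apply. Qed.

Lemma Psibar_inv_linear_code (e : 'I_(2 ^ k) -> {set 'I_k})
    (Cs : 'I_(2 ^ k) -> {vspace 'rV[F]_n}) :
  Bk_linear_code (Psibar_inv e Cs).
Proof.
split=> [|x y|a x]; rewrite !inE.
- by apply/forallP => j; rewrite Bvec_zeroE Psibar_comp0 mem0v.
- move=> /forallP Cx /forallP Cy; apply/forallP => j.
  by rewrite Bvec_addE Psibar_compD memvD.
- by move=> /forallP Cx; apply/forallP => j; rewrite Psibar_compZ memvZ.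
Qed.

Definition Psibar_code C S : {vspace 'rV[F]_n} :=
  <<[seq Psibar_comp x S | x <- enum C]>>%VS.

Lemma Psibar_code_comp C S x : x \in C -> Psibar_comp x S \in Psibar_code C S.
Proof. by move=> Cx; apply/memv_span/map_f; rewrite mem_enum. Qed.

Lemma Psibar_codeP C S v : Bk_linear_code C ->
  reflect (exists2 x, x \in C & Psibar_comp x S = v) (v \in Psibar_code C S).
Proof.
move=> codeC; apply: (iffP idP) => [|[x Cx <-]]; last exact: Psibar_code_comp.
rewrite /Psibar_code; set s := [seq _ | _ <- _] => /(coord_span (X := in_tuple s)) ->.
have lt_size (i : 'I_(size s)) : (i < size (enum C))%N.
  by rewrite -(size_map (fun x => Psibar_comp x S)).
exists (\sum_(i < size s)
          Bvec_scale (monomial set0 (coord (in_tuple s) i v)) (nth 0 (enum C) i)).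
  apply: linear_code_sum => // i _; apply: linear_code_scale => //.
  by rewrite -mem_enum mem_nth.
rewrite Psibar_comp_sum; apply: eq_bigr => i _.
by rewrite Psibar_compZ Psi_monomial sub0set /s (nth_map 0).
Qed.

Lemma Bvec_idem_decomposition y (x : {set 'I_k} -> Bvec F k n) :
    (forall S, Psibar_comp (x S) S = Psibar_comp y S) ->
  y = \sum_S Bvec_scale (idem F S) (x S).
Proof.
move=> eq_xy; apply/ffunP => i; rewrite sum_ffunE; apply: Psi_inj => T.
rewrite Psi_sum (bigD1 T) //= big1 => [|S neST]; rewrite ffunE PsiM Psi_idem.
  by rewrite eqxx mul1r addr0; move/rowP/(_ i): (eq_xy T); rewrite !mxE.
by rewrite (negbTE neST) mul0r.
Qed.

Lemma linear_code_Psibar_inv C (e : 'I_(2 ^ k) -> {set 'I_k})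
    (e_inv : {set 'I_k} -> 'I_(2 ^ k)) :
  cancel e_inv e -> Bk_linear_code C ->
  C = Psibar_inv e (fun j => Psibar_code C (e j)).
Proof.
move=> e_invK codeC; apply/setP => y; rewrite inE.
apply/idP/forallP => [Cy j | Cs_y]; first exact: Psibar_code_comp.
have /fin_all_exists[x Cx] S :
    exists x, x \in C /\ Psibar_comp x S = Psibar_comp y S.
  have := Cs_y (e_inv S); rewrite e_invK => /(Psibar_codeP _ _ codeC)[x Cx eq_xy].
  by exists x.
rewrite (Bvec_idem_decomposition (fun S => (Cx S).2)).
by apply: linear_code_sum => // S _; apply: linear_code_scale; last exact: (Cx S).1.
Qed.

End CoordinateCodes.

Theorem lemma4p4 (p r : nat) (F : finFieldType) (hp : prime p) (hr : (0 < r)%N)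
  (hF : #|F| = (p ^ r)%N) (k n : nat) (hk : (0 < k)%N)
  (e : 'I_(2 ^ k) -> {set 'I_k}) (he : bijective e)
  (C : {set Bvec F k n}) :
  Bk_linear_code C <->
  exists Cs : 'I_(2 ^ k) -> {vspace 'rV[F]_n}, C = Psibar_inv e Cs.
Proof.
split=> [codeC | [Cs ->]]; last exact: Psibar_inv_linear_code.
have [e_inv _ e_invK] := he.
by exists (fun j => Psibar_code C (e j)); apply: linear_code_Psibar_inv e_invK codeC.
Qed.
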